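(* Let $(W,\mathrm d)$ and $(W_h,\mathrm d_h)$, $h>0$, be Hilbert complexes with morphisms $i_h\colon W_h\to W$ bounded uniformly in $h$. If $\Pi_h\colon W^k\to W_h^k$ is a family of bounded linear maps, bounded uniformly with respect to $h$, satisfying $\Pi_h\circ i_h^k=\mathrm{id}_{W_h^k}$, then there is a constant $C$ independent of $h$ such that for all $f\in W^k$, \[\|\Pi_hf-i_h^*f\|_h\le C\Big(\|I-J_h\|\,\|f\|+\inf_{\phi\in i_hW_h^k}\|f-\phi\|\Big).\]
   Context: A Hilbert complex $(W,\mathrm d)$ is a sequence of Hilbert spaces $W^k$ with closed densely defined linear maps $\mathrm d^k\colon V^k\subset W^k\to V^{k+1}\subset W^{k+1}$, $\mathrm d^k\circ\mathrm d^{k-1}=0$; a morphism is a sequence of bounded linear maps commuting with differentials. $\|\cdot\|$ is the $W^k$ norm, $\|\cdot\|_h$ the $W_h^k$ norm. $i_h^*\colon W^k\to W_h^k$ is the Hilbert adjoint of $i_h^k\colon W_h^k\to W^k$, $J_h=i_h^*i_h\colon W_h^k\to W_h^k$, and $\|I-J_h\|$ is its operator norm. *)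

From HB Require Import structures.
From mathcomp Require Import all_boot all_order all_algebra.
From mathcomp Require Import all_classical all_reals all_analysis.
Unset Printing Implicit Defensive.
Import Order.TTheory GRing.Theory Num.Theory.
Import numFieldNormedType.Exports.
Local Open Scope classical_set_scope.
Local Open Scope ring_scope.

Section Defs.
Variable R : realType.

(* A real inner product on a normed space, compatible with its norm.
   A Hilbert space is a complete normed space (completeNormedModType R)
   together with such an inner product. *)
Record inner_product (V : normedModType R) := InnerProduct {
  ip : V -> V -> R;
  ipC : forall x y, ip x y = ip y x;
  ipDl : forall (a : R) (x y z : V), ip (a *: x + y) z = a * ip x z + ip y z;
  ip_norm : forall x, ip x x = `|x| ^+ 2 }.

(* Hilbert complex: Hilbert spaces W^k, domains V^k (subspaces), and
   differentials d^k : V^k -> V^(k+1), linear, closed, densely defined,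
   with d^(k+1) o d^k = 0.  Values of d^k outside V^k are irrelevant. *)
Record hilbert_complex := HilbertComplex {
  HW : nat -> completeNormedModType R;
  Hip : forall k, inner_product (HW k);
  HV : forall k, set (HW k);
  Hd : forall k, HW k -> HW k.+1;
  HV0 : forall k : nat, HV k (0 : HW k);
  HV_lin : forall k (a : R) (x y : HW k), HV k x -> HV k y -> HV k (a *: x + y);
  Hd_lin : forall k (a : R) (x y : HW k), HV k x -> HV k y ->
     Hd k (a *: x + y) = a *: Hd k x + Hd k y;
  Hd_dom : forall k (x : HW k), HV k x -> HV k.+1 (Hd k x);
  Hd_closed : forall k (u : nat -> HW k) (x : HW k) (y : HW k.+1),
     (forall n, HV k (u n)) -> u @ \oo --> x -> (fun n => Hd k (u n)) @ \oo --> y ->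
     HV k x /\ Hd k x = y;
  HV_dense : forall k, closure (HV k) = setT;
  Hdd : forall k (x : HW k), HV k x -> Hd k.+1 (Hd k x) = 0 }.

Record hc_morphism (A B : hilbert_complex) := HCMorphism {
  hm : forall k, {linear HW A k -> HW B k};
  hm_bounded : forall k, exists M : R, forall x, `|hm k x| <= M * `|x|;
  hm_dom : forall k x, HV A k x -> HV B k (hm k x);
  hm_comm : forall k x, HV A k x -> Hd B k (hm k x) = hm k.+1 (Hd A k x) }.

Definition opnorm (V : normedModType R) (T : V -> V) : R :=
  sup [set `|T u| | u in [set u : V | `|u| <= 1]].

End Defs.

Arguments ip {R V} _ _ _.
Arguments HW {R} _ _.
Arguments Hip {R} _ _.
Arguments HV {R} _ _.
Arguments Hd {R} _ _ _.
Arguments hm {R A B} _ _.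
Arguments opnorm {R V} _.
Arguments hc_morphism {R} _ _.

(* For every u in W_h, Pi_h i_h u = u gives the splitting
     Pi_h f - i_h^* f = Pi_h (f - i_h u) + (I - J_h) u - i_h^* (f - i_h u)
   together with |u| = |Pi_h i_h u| <= |Pi_h| (|f| + |f - i_h u|).  By
   Cauchy-Schwarz, i_h^* is bounded by the bound of i_h, so the uniform bounds
   on Pi_h and i_h give |Pi_h f - i_h^* f| <= C (|I - J_h| |f| + |f - i_h u|)
   for every u; it remains to pass to the infimum over u. *)
From mathcomp Require Import all_boot all_order all_algebra.
From mathcomp Require Import all_classical all_reals all_analysis.
From mathcomp Require Import lra.
Import Order.TTheory GRing.Theory Num.Theory.
Local Open Scope classical_set_scope.
Local Open Scope ring_scope.

Section InnerProduct.
Context {R : realType} {V : normedModType R} (P : inner_product R V).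

Lemma ip_0l z : ip P 0 z = 0.
Proof. by have := @ipDl _ _ P 1 0 0 z; rewrite scale1r addr0 mul1r; lra. Qed.

Lemma ip_scalel a x z : ip P (a *: x) z = a * ip P x z.
Proof. by have := @ipDl _ _ P a x 0 z; rewrite addr0 ip_0l addr0. Qed.

Lemma ip_addl x y z : ip P (x + y) z = ip P x z + ip P y z.
Proof. by have := @ipDl _ _ P 1 x y z; rewrite scale1r mul1r. Qed.

Lemma ip_subl x y z : ip P (x - y) z = ip P x z - ip P y z.
Proof. by rewrite ip_addl -scaleN1r ip_scalel mulN1r. Qed.

Lemma ip_scaler a x z : ip P z (a *: x) = a * ip P z x.
Proof. by rewrite ipC ip_scalel ipC. Qed.

Lemma ip_addr x y z : ip P z (x + y) = ip P z x + ip P z y.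
Proof. by rewrite ipC ip_addl !(@ipC _ _ P z). Qed.

Lemma ip_subr x y z : ip P z (x - y) = ip P z x - ip P z y.
Proof. by rewrite ipC ip_subl !(@ipC _ _ P z). Qed.

Lemma ip_self_eq0 x : ip P x x = 0 -> x = 0.
Proof. by rewrite ip_norm => /eqP; rewrite sqrf_eq0 normr_eq0 => /eqP. Qed.

Lemma ip_polarization x y : 4 * ip P x y = `|x + y| ^+ 2 - `|x - y| ^+ 2.
Proof.
rewrite -!(@ip_norm _ _ P) ip_addl ip_subl !ip_subr !ip_addr (@ipC _ _ P y x).
lra.
Qed.

Lemma ip_cauchy_schwarz x y : ip P x y <= `|x| * `|y|.
Proof.
have sum_sq : `|x + y| ^+ 2 <= (`|x| + `|y|) ^+ 2.
  by rewrite ler_sqr ?nnegrE ?addr_ge0 // ler_normD.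
have diff_sq : (`|x| - `|y|) ^+ 2 <= `|x - y| ^+ 2.
  by rewrite -real_normK ?num_real // ler_sqr ?nnegrE // ler_dist_dist.
have := ip_polarization x y; nra.
Qed.

End InnerProduct.

Section Adjoint.
Context {R : realType} {V W : normedModType R}.
Context {P : inner_product R V} {Q : inner_product R W}.
Context {T : {linear V -> W}} {S : W -> V}.
Hypothesis adj : forall u f, ip Q (T u) f = ip P u (S f).

Lemma adjoint_linear a f g : S (a *: f + g) = a *: S f + S g.
Proof.
apply/eqP; rewrite -subr_eq0; apply/eqP/(ip_self_eq0 P).
set w := _ - _.
by rewrite {2}/w ip_subr ip_addr ip_scaler -!adj ip_addr ip_scaler subrr.
Qed.

Lemma adjoint0 : S 0 = 0.
Proof.
have := adjoint_linear 1 0 0; rewrite scaler0 addr0 scale1r.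
by move=> /esym/(canRL (addrK _)); rewrite subrr.
Qed.

Lemma adjointZ a f : S (a *: f) = a *: S f.
Proof. by have := adjoint_linear a f 0; rewrite !addr0 adjoint0 addr0. Qed.

Lemma adjointB f g : S (f - g) = S f - S g.
Proof. by have := adjoint_linear (-1) g f; rewrite !scaleN1r addrC => ->; rewrite addrC. Qed.

Lemma adjoint_bound M : 0 <= M -> (forall u, `|T u| <= M * `|u|) ->
  forall f, `|S f| <= M * `|f|.
Proof.
move=> M0 T_bound f.
have sq : `|S f| ^+ 2 <= M * `|S f| * `|f|.
  rewrite -(@ip_norm _ _ P) -adj; apply: le_trans (ip_cauchy_schwarz Q _ _) _.
  by rewrite ler_wpM2r // T_bound.
have [->|nz] := eqVneq `|S f| 0; first by rewrite mulr_ge0.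
have Sf_gt0 : 0 < `|S f| by rewrite lt0r nz normr_ge0.
by rewrite -(ler_pM2l Sf_gt0) -expr2 mulrCA mulrA.
Qed.

End Adjoint.

Section OperatorNorm.
Context {R : realType} {V : normedModType R} {T : V -> V} {K : R}.
Hypotheses (K_ge0 : 0 <= K) (T_bound : forall v, `|T v| <= K * `|v|).

Let image_unit_ball := [set `|T u| | u in [set u : V | `|u| <= 1]].

Let image_unit_ball_neq0 : image_unit_ball !=set0.
Proof. by exists `|T 0|, 0 => //=; rewrite normr0. Qed.

Let image_unit_ball_ub : ubound image_unit_ball K.
Proof.
move=> _ [u /= u_le1 <-]; apply: le_trans (T_bound u) _.
by rewrite -[leRHS]mulr1 ler_wpM2l.
Qed.

Let image_unit_ball_has_sup : has_sup image_unit_ball.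
Proof. by split; [exact: image_unit_ball_neq0 | exists K; exact: image_unit_ball_ub]. Qed.

Lemma opnorm_ge0 : 0 <= opnorm T.
Proof.
apply: le_trans (sup_upper_bound image_unit_ball_has_sup _); first exact: normr_ge0 (T 0).
by exists 0 => //=; rewrite normr0.
Qed.

Lemma opnorm_le : opnorm T <= K.
Proof. exact: ge_sup image_unit_ball_neq0 image_unit_ball_ub. Qed.

Lemma ler_opnorm (T_scale : forall (a : R) v, T (a *: v) = a *: T v) u :
  `|T u| <= opnorm T * `|u|.
Proof.
have [->|u_neq0] := eqVneq u 0.
  by have := T_bound 0; rewrite normr0 !mulr0.
have u_gt0 : 0 < `|u| by rewrite normr_gt0.
have unit_u : `| `|u|^-1 *: u| <= 1.
  by rewrite normrZ normrV ?unitfE ?normr_eq0 // normr_id mulVf ?gt_eqF.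
have := sup_upper_bound image_unit_ball_has_sup (ex_intro2 _ _ (`|u|^-1 *: u) unit_u erefl).
rewrite T_scale normrZ normrV ?unitfE ?normr_eq0 // normr_id.
by rewrite ler_pdivrMl // mulrC.
Qed.

End OperatorNorm.

Lemma ler_pM_addr_inf (R : realType) (E : set R) (c a x : R) :
  0 < c -> E !=set0 -> (forall e, E e -> x <= c * (a + e)) ->
  x <= c * (a + inf E).
Proof.
move=> c_gt0 E_neq0 x_le; rewrite -ler_pdivrMl // -lerBlDl.
by apply: lb_le_inf => // e /x_le; rewrite -ler_pdivrMl // lerBlDl.
Qed.

Section ProjectionEstimate.
Context {R : realType} {V Vh : normedModType R}.
Context {P : inner_product R V} {Ph : inner_product R Vh}.
Context {I : {linear Vh -> V}} {S : V -> Vh} {Pi : {linear V -> Vh}}.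
Context {MI MP : R}.
Hypotheses (adj : forall u f, ip P (I u) f = ip Ph u (S f))
  (Pi_I : forall u, Pi (I u) = u).
Hypotheses (MI_ge0 : 0 <= MI) (MP_ge0 : 0 <= MP)
  (I_bound : forall u, `|I u| <= MI * `|u|)
  (Pi_bound : forall f, `|Pi f| <= MP * `|f|).

(* The operator I - J_h of the statement, with J_h = i_h^* i_h. *)
Let defect (u : Vh) := u - S (I u).
Let K := 1 + MI ^+ 2.
Let C := MP + K * MP + MI + 1.

Let S_bound : forall f, `|S f| <= MI * `|f|.
Proof. exact: adjoint_bound adj _ MI_ge0 I_bound. Qed.

Let K_ge0 : 0 <= K.
Proof. by rewrite addr_ge0 ?sqr_ge0. Qed.

Lemma defect_bound u : `|defect u| <= K * `|u|.
Proof.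
apply: le_trans (ler_normB _ _) _.
have SI_le : `|S (I u)| <= MI * (MI * `|u|).
  by apply: le_trans (S_bound _) _; rewrite ler_wpM2l.
by rewrite /K mulrDl mul1r lerD2l expr2 -mulrA.
Qed.

Lemma defectZ a u : defect (a *: u) = a *: defect u.
Proof. by rewrite /defect linearZ /= (adjointZ adj) scalerBr. Qed.

Lemma projection_defect_split f u :
  Pi f - S f = Pi (f - I u) + defect u - S (f - I u).
Proof.
rewrite linearB /= Pi_I (adjointB adj) /defect.
by rewrite opprB !addrA subrK addrNK.
Qed.

Lemma projection_defect_le f u :
  `|Pi f - S f| <= C * (opnorm defect * `|f| + `|f - I u|).
Proof.
set d := `|f - I u|; set N := opnorm defect.
have u_le : `|u| <= MP * (`|f| + d).
  rewrite -{1}(Pi_I u); apply: le_trans (Pi_bound _) _; rewrite ler_wpM2l //.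
  by rewrite -{1}(subKr f (I u)) ler_normB.
have split_le : `|Pi f - S f| <= MP * d + N * `|u| + MI * d.
  rewrite (projection_defect_split f u); apply: le_trans (ler_normB _ _) _.
  apply: lerD; last exact: S_bound.
  apply: le_trans (ler_normD _ _) _.
  by apply: lerD; [exact: Pi_bound | exact: ler_opnorm K_ge0 defect_bound defectZ u].
have N_ge0 : 0 <= N := opnorm_ge0 K_ge0 defect_bound.
have N_le : N <= K := opnorm_le K_ge0 defect_bound.
have d_ge0 : 0 <= d := normr_ge0 _.
have f_ge0 := normr_ge0 f.
have Nu_le : N * `|u| <= N * (MP * (`|f| + d)) by rewrite ler_wpM2l.
have NMd_le : N * (MP * d) <= K * (MP * d) by rewrite ler_wpM2r ?mulr_ge0.
have L_le : `|Pi f - S f| <= MP * (N * `|f|) + (MP + K * MP + MI) * d by lra.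
have C1 : MP * (N * `|f|) <= C * (N * `|f|).
  by rewrite ler_wpM2r ?mulr_ge0 // /C -!addrA lerDl !addr_ge0 ?mulr_ge0.
have C2 : (MP + K * MP + MI) * d <= C * d by rewrite ler_wpM2r // /C lerDl.
lra.
Qed.

Theorem projection_estimate f :
  `|Pi f - S f| <= C * (opnorm defect * `|f| + inf [set `|f - I u| | u in [set: Vh]]).
Proof.
apply: ler_pM_addr_inf; first by rewrite /C ltr_pwDr // ?addr_ge0 ?mulr_ge0.
  by exists `|f - I 0|, 0.
by move=> _ [u _ <-]; exact: projection_defect_le.
Qed.

End ProjectionEstimate.

Lemma exists_nonneg_bound {R : realType} {A : Type} {Q : A -> Prop}
    {X Y : A -> normedModType R} {F : forall h, X h -> Y h} :
  (exists M, forall h, Q h -> forall u, `|F h u| <= M * `|u|) ->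
  exists2 M, 0 <= M & forall h, Q h -> forall u, `|F h u| <= M * `|u|.
Proof.
case=> M F_bound; exists (Num.max M 0) => [|h Qh u]; first by rewrite le_max lexx orbT.
by apply: le_trans (F_bound h Qh u) _; rewrite ler_wpM2r // le_max lexx.
Qed.

Theorem mainTheorem11 (R : realType) (W : hilbert_complex R)
  (Wh : R -> hilbert_complex R) (i : forall h, hc_morphism (Wh h) W)
  (i_unif : forall k, exists M : R, forall h, 0 < h ->
     forall u, `|hm (i h) k u| <= M * `|u|)
  (k : nat)
  (istar : forall h, HW W k -> HW (Wh h) k)
  (istar_adj : forall h, 0 < h -> forall (u : HW (Wh h) k) (f : HW W k),
     ip (Hip W k) (hm (i h) k u) f = ip (Hip (Wh h) k) u (istar h f))
  (Pi : forall h, {linear HW W k -> HW (Wh h) k})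
  (Pi_unif : exists M : R, forall h, 0 < h -> forall f, `|Pi h f| <= M * `|f|)
  (Pi_inv : forall h, 0 < h -> forall u, Pi h (hm (i h) k u) = u) :
  exists C : R, forall h, 0 < h -> forall f : HW W k,
    `|Pi h f - istar h f| <=
      C * (opnorm (fun u : HW (Wh h) k => u - istar h (hm (i h) k u)) * `|f|
           + inf [set `|f - hm (i h) k u| | u in [set: HW (Wh h) k]]).
Proof.
have [MP MP_ge0 Pi_bound] := @exists_nonneg_bound _ _ _
  (fun=> HW W k) (fun h => HW (Wh h) k) Pi Pi_unif.
have [MI MI_ge0 I_bound] := @exists_nonneg_bound _ _ _
  (fun h => HW (Wh h) k) (fun=> HW W k) (fun h => hm (i h) k) (i_unif k).
exists (MP + (1 + MI ^+ 2) * MP + MI + 1) => h h_gt0 f.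
exact: (projection_estimate (I := hm (i h) k) (istar_adj h h_gt0) (Pi_inv h h_gt0)
  MI_ge0 MP_ge0 (I_bound h h_gt0) (Pi_bound h h_gt0) f).
Qed.
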